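(* Let $L_0$ be the Laplacian of a connected undirected simple graph on $n$ vertices with positive nominal edge weight vector $\omega_0$, with nonzero eigenvalues $0<\lambda_{0,2}\le\dots\le\lambda_{0,n}$. Fix $\tau>0$, $b\neq0$ and $\alpha_\omega\in[0,1)$ with $(1+\alpha_\omega)\lambda_{0,n}\tau<\pi/2$. Let $f_\tau(\lambda)=\frac{\cos(\lambda\tau)}{\lambda(1-\sin(\lambda\tau))}$ on $(0,\pi/(2\tau))$, let $\bar\lambda$ be its (unique) minimizer there, and set $$\chi^{\pm}(\lambda)=\frac{|f_\tau((1\pm\alpha_\omega)\lambda)-f_\tau(\lambda)|}{f_\tau(\lambda)}.$$ Consider uniformly scaled edge weights $\omega=s\,\omega_0$ with $s\in[1-\alpha_\omega,1+\alpha_\omega]$, with Laplacian $L=sL_0$, and let $\Sigma$, $\Sigma_0$ denote the steady-state covariances for $L$ and $L_0$ respectively. Then: (i) if $(1+\alpha_\omega)\lambda_{0,n}\le\bar\lambda$, then $(1-\varepsilon^-)\Sigma_0\preceq\Sigma\preceq(1+\varepsilon^+)\Sigma_0$ with $\varepsilon^-=\max_{k\in\{2,\dots,n\}}\chi^+(\lambda_{0,k})$ and $\varepsilon^+=\max_{k\in\{2,\dots,n\}}\chi^-(\lambda_{0,k})$; (ii) if $(1-\alpha_\omega)\lambda_{0,2}\ge\bar\lambda$, then $(1-\varepsilon^-)\Sigma_0\preceq\Sigma\preceq(1+\varepsilon^+)\Sigma_0$ with $\varepsilon^+=\max_{k\in\{2,\dots,n\}}\chi^+(\lambda_{0,k})$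 and $\varepsilon^-=\max_{k\in\{2,\dots,n\}}\chi^-(\lambda_{0,k})$.
   Context: Network: $\mathrm dx_t=-L\,x_{t-\tau}\,\mathrm dt+b\,\mathrm dw_t$ with $w_t$ standard $n$-dimensional Brownian motion. Writing $L=Q\Lambda Q^\top$ with $Q=[q_1|\dots|q_n]$ orthogonal, $q_1=\mathbf 1_n/\sqrt n$, $\Lambda=\mathrm{diag}(0,\lambda_2,\dots,\lambda_n)$, $\lambda_n\tau<\pi/2$, the observables $y=M_nx$, $M_n=I_n-\frac1n\mathbf 1_n\mathbf 1_n^\top$, have steady-state law $\mathcal N(0,\Sigma)$ with $\Sigma=b^2M_nQ\,\mathrm{diag}\big(0,\tfrac12f_\tau(\lambda_2),\dots,\tfrac12f_\tau(\lambda_n)\big)Q^\top M_n$. $A\preceq B$ means $B-A$ is positive semidefinite. *)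

From HB Require Import structures.
From mathcomp Require Import all_boot all_order all_algebra.
From mathcomp Require Import all_classical all_reals all_analysis.
Set Implicit Arguments. Unset Strict Implicit. Unset Printing Implicit Defensive.
Import Order.TTheory GRing.Theory Num.Theory.
Local Open Scope ring_scope.

Definition ftau (R : realType) (tau x : R) : R :=
  cos (x * tau) / (x * (1 - sin (x * tau))).

(* chi^{+/-}; sgn = 1 for chi^+, sgn = -1 for chi^- *)
Definition chi (R : realType) (tau alpha sgn x : R) : R :=
  `| ftau tau ((1 + sgn * alpha) * x) - ftau tau x | / ftau tau x.

Definition laplacian (R : realType) (N : nat) (w : 'I_N -> 'I_N -> R) : 'M[R]_N :=
  \matrix_(i, j) (if i == j then \sum_(k < N) w i k else - w i j).

Definition centering (R : realType) (N : nat) : 'M[R]_N :=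
  1%:M - (N%:R)^-1 *: const_mx 1.

(* steady-state covariance b^2 M Q diag(0, f(l_2)/2, ..., f(l_N)/2) Q^T M
   for a decomposition L = Q diag(lam) Q^T with lam ord0 = 0 *)
Definition ss_covariance (R : realType) (n : nat) (tau b : R)
  (Q : 'M[R]_n.+1) (lam : 'I_n.+1 -> R) : 'M[R]_n.+1 :=
  b ^+ 2 *: (@centering R n.+1 *m Q
     *m diag_mx (\row_i (if i == ord0 then 0 else ftau tau (lam i) / 2))
     *m Q^T *m @centering R n.+1).

Definition loewner_le (R : realType) (N : nat) (A B : 'M[R]_N) : Prop :=
  forall v : 'cV[R]_N, 0 <= (v^T *m (B - A) *m v) 0 0.

(* maximum over k in {2,...,n} (0-based: k <> 0) *)
Definition max_nonzero (R : realType) (n : nat) (g : 'I_n.+1 -> R) : R :=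
  \big[Num.max/0]_(k < n.+1 | k != ord0) g k.

From HB Require Import structures.
From mathcomp Require Import all_boot all_order all_algebra.
From mathcomp Require Import all_classical all_reals all_analysis.
From mathcomp Require Import ring lra.
Import Order.TTheory GRing.Theory Num.Theory.
Local Open Scope ring_scope.
Import numFieldNormedType.Exports.

(* [ftau tau x = tau / inv_ftau1 (x tau)], where
   [inv_ftau1 u = u cos u / (1 + sin u)] has derivative
   [(cos u - u) / (1 + sin u)]: it increases up to the fixed point of [cos]
   and decreases afterwards.  Hence [ftau tau] decreases on
   [(0, lbar]] and increases on [[lbar, pi / (2 tau))].  In case (i) every
   [s lam0 k] lies in the decreasing branch, so [ftau tau (s lam0 k)] is caught
   between [ftau tau ((1 + alpha) lam0 k)] and [ftau tau ((1 - alpha) lam0 k)];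
   case (ii) is the mirror image.  Both covariances are diagonal in the basis [Q],
   so the Loewner bounds reduce to these eigenvalue-wise bounds. *)

Lemma rel_dist_sandwich (R : realFieldType) (F0 F A B : R) :
  0 < F0 -> A <= F -> F <= B ->
  (1 - `|A - F0| / F0) * F0 <= F /\ F <= (1 + `|B - F0| / F0) * F0.
Proof.
move=> F0_gt0 AF FB; rewrite mulrBl mulrDl !mul1r !divfK ?gt_eqF //.
have := ler_norm (B - F0); have := ler_norm (F0 - A); rewrite distrC; lra.
Qed.

Section Delay.
Variable R : realType.
Implicit Types u v x y : R.

Definition inv_ftau1 u : R := u * cos u / (1 + sin u).

Lemma pihalf_lt_pi : pi / 2 < pi :> R.
Proof. by have := @pi_gt0 R; lra. Qed.

Lemma ltr_cos_0pi x y : 0 <= x -> x < y -> y <= pi -> cos y < cos x.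
Proof.
move=> x0 xy ypi; have y0 := le_trans x0 (ltW xy).
by rewrite ltr_cos ?in_itv /= ?x0 ?y0 ?ypi ?(le_trans (ltW xy)).
Qed.

Lemma cos_gt0_0pihalf {u} : 0 < u < pi / 2 -> 0 < cos u.
Proof.
move=> /andP[u0 upi]; apply: cos_gt0_pihalf; rewrite upi andbT.
by apply: lt_trans u0; rewrite oppr_lt0 divr_gt0 ?pi_gt0.
Qed.

Lemma addr1sin_gt0 {u} : 0 < u < pi / 2 -> 0 < 1 + sin u.
Proof. by move=> /sin_gt0_pihalf su; rewrite addr_gt0. Qed.

Lemma is_derive_inv_ftau1 u : 1 + sin u != 0 ->
  is_derive u 1 inv_ftau1 ((cos u - u) / (1 + sin u)).
Proof.
move=> su.
have dV : is_derive u (1 : R) (fun v => (1 + sin v)^-1) (- (1 + sin u) ^- 2 * cos u).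
  apply: is_deriveV => //; rewrite -[cos u]add0r; exact: is_deriveD.
have dM := is_deriveM (is_deriveM (is_derive_id u (1 : R)) (is_derive_cos u)) dV.
apply: is_derive_eq dM _; have -> : (id * cos) u = u * cos u by [].
rewrite /GRing.scale /=.
(* the product rule gives [(cos u - u) / (1 + sin u)] plus
   [u (1 - cos^2 u - sin^2 u) / (1 + sin u)^2] *)
apply/eqP; rewrite -subr_eq0; apply/eqP.
transitivity (u * (1 - (cos u ^+ 2 + sin u ^+ 2)) / (1 + sin u) ^+ 2); first by field.
by rewrite cos2Dsin2 subrr mulr0 mul0r.
Qed.

Lemma derivable_inv_ftau1 u : 0 < u < pi / 2 -> derivable inv_ftau1 u 1.
Proof. by move=> /addr1sin_gt0/lt0r_neq0/is_derive_inv_ftau1 d; exact: ex_derive. Qed.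

Lemma derive1_inv_ftau1 u : 0 < u < pi / 2 ->
  derive1 inv_ftau1 u = (cos u - u) / (1 + sin u).
Proof.
by move=> /addr1sin_gt0/lt0r_neq0/is_derive_inv_ftau1 d; rewrite derive1E derive_val.
Qed.

Lemma continuous_inv_ftau1 {u v} : 0 < u -> v < pi / 2 ->
  {within `[u, v], continuous inv_ftau1}%classic.
Proof.
move=> u0 vpi; apply: derivable_within_continuous => x /[!in_itv] /andP[ux xv].
by apply: derivable_inv_ftau1; rewrite (lt_le_trans u0 ux) (le_lt_trans xv vpi).
Qed.

Lemma inv_ftau1_gt0 {u} : 0 < u < pi / 2 -> 0 < inv_ftau1 u.
Proof.
move=> hu; rewrite divr_gt0 ?mulr_gt0 ?cos_gt0_0pihalf ?addr1sin_gt0 //.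
by case/andP: hu.
Qed.

Lemma in_0pihalf {u v x} : 0 < u -> v < pi / 2 -> x \in `]u, v[ -> 0 < x < pi / 2.
Proof.
by move=> u0 vpi /[!in_itv] /andP[ux xv]; rewrite (lt_trans u0 ux) (lt_trans xv vpi).
Qed.

(* The derivative [(cos u - u) / (1 + sin u)] changes sign once, at the fixed
   point of [cos]. *)
Lemma inv_ftau1_le u v : 0 < u -> u <= v -> v < pi / 2 -> v <= cos v ->
  inv_ftau1 u <= inv_ftau1 v.
Proof.
move=> u0 uv vpi vcos.
have der x : x \in `]u, v[ -> derivable inv_ftau1 x 1.
  by move=> /(in_0pihalf u0 vpi) /derivable_inv_ftau1.
have der_ge0 x : x \in `]u, v[ -> 0 <= derive1 inv_ftau1 x.
  move=> xuv; have /andP[x0 xpi] := in_0pihalf u0 vpi xuv.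
  move: xuv; rewrite in_itv => /andP[_ xv].
  rewrite derive1_inv_ftau1 ?x0 // divr_ge0 ?(ltW (addr1sin_gt0 _)) ?x0 //.
  rewrite subr_ge0 (le_trans (ltW xv)) // (le_trans vcos) //.
  by apply/ltW/ltr_cos_0pi; rewrite ?(ltW x0) ?(ltW (lt_trans vpi pihalf_lt_pi)).
have := ger0_derive1_le_cc der der_ge0 (continuous_inv_ftau1 u0 vpi).
by apply; rewrite ?in_itv /= ?lexx ?uv.
Qed.

Lemma inv_ftau1_ge u v : 0 < u -> u <= v -> v < pi / 2 -> cos u <= u ->
  inv_ftau1 v <= inv_ftau1 u.
Proof.
move=> u0 uv vpi ucos.
have der x : x \in `]u, v[ -> derivable inv_ftau1 x 1.
  by move=> /(in_0pihalf u0 vpi) /derivable_inv_ftau1.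
have der_le0 x : x \in `]u, v[ -> derive1 inv_ftau1 x <= 0.
  move=> xuv; have /andP[x0 xpi] := in_0pihalf u0 vpi xuv.
  move: xuv; rewrite in_itv => /andP[ux _].
  rewrite derive1_inv_ftau1 ?x0 // mulr_le0_ge0 ?invr_ge0 ?(ltW (addr1sin_gt0 _)) ?x0 //.
  rewrite subr_le0 (le_trans _ (le_trans ucos (ltW ux))) //.
  by apply/ltW/ltr_cos_0pi; rewrite ?(ltW u0) ?(ltW (lt_trans xpi pihalf_lt_pi)).
have := ler0_derive1_le_cc der der_le0 (continuous_inv_ftau1 u0 vpi).
by apply; rewrite ?in_itv /= ?lexx ?uv.
Qed.

Section Maximizer.
Variable c : R.
Hypotheses (c_gt0 : 0 < c) (c_lt_pihalf : c < pi / 2).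
Hypothesis c_max : forall {u}, 0 < u -> u < pi / 2 -> inv_ftau1 u <= inv_ftau1 c.

Lemma inv_ftau1_le_left u v : 0 < u -> u <= v -> v <= c ->
  inv_ftau1 u <= inv_ftau1 v.
Proof.
move=> u0 uv vc; have vpi := le_lt_trans vc c_lt_pihalf.
have [vcos|cosv] := lerP v (cos v); first exact: inv_ftau1_le.
apply: (le_trans (c_max u0 (le_lt_trans uv vpi))).
exact: inv_ftau1_ge (lt_le_trans u0 uv) vc c_lt_pihalf (ltW cosv).
Qed.

Lemma inv_ftau1_ge_right u v : c <= u -> u <= v -> v < pi / 2 ->
  inv_ftau1 v <= inv_ftau1 u.
Proof.
move=> cu uv vpi; have u0 := lt_le_trans c_gt0 cu.
have [cosu|ucos] := lerP (cos u) u; first exact: inv_ftau1_ge.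
apply: (le_trans (c_max (lt_le_trans u0 uv) vpi)).
exact: inv_ftau1_le c_gt0 cu (le_lt_trans uv vpi) (ltW ucos).
Qed.

End Maximizer.

Implicit Types tau : R.

Lemma ftau0 tau : ftau tau 0 = 0.
Proof. by rewrite /ftau !mul0r invr0 mulr0. Qed.

(* [cos u / (1 - sin u) = (1 + sin u) / cos u] since [cos^2 u + sin^2 u = 1]. *)
Lemma ftauE tau x : 0 < tau -> 0 < x -> x * tau < pi / 2 ->
  ftau tau x = tau / inv_ftau1 (x * tau).
Proof.
move=> tau0 x0 xpi; set u := x * tau.
have hu : 0 < u < pi / 2 by rewrite mulr_gt0.
have cu := cos_gt0_0pihalf hu; have su := addr1sin_gt0 hu.
have sin_lt1 : sin u < 1.
  rewrite lt_neqAle sin_le1 andbT; apply: contraTneq cu => su1.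
  have /eqP := cos2Dsin2 u; rewrite su1 expr1n -subr_eq0 addrK sqrf_eq0.
  by move=> /eqP->; rewrite ltxx.
apply/eqP; rewrite -subr_eq0; apply/eqP.
transitivity ((cos u ^+ 2 + sin u ^+ 2 - 1) / (x * (1 - sin u) * cos u)).
  rewrite /ftau /inv_ftau1 -/u /u; field.
  by rewrite -/u !gt_eqF ?subr_gt0.
by rewrite cos2Dsin2 subrr mul0r.
Qed.

Lemma ftau_gt0 tau x : 0 < tau -> 0 < x -> x * tau < pi / 2 -> 0 < ftau tau x.
Proof.
by move=> tau0 x0 xpi; rewrite ftauE // divr_gt0 // inv_ftau1_gt0 // mulr_gt0.
Qed.

Lemma ftau_ge0 tau x : 0 < tau -> 0 <= x -> x * tau < pi / 2 -> 0 <= ftau tau x.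
Proof.
move=> tau0; rewrite le0r => /predU1P[->|x0 xpi]; first by rewrite ftau0.
exact/ltW/ftau_gt0.
Qed.

Lemma ltr_pdiv_pihalf tau x : 0 < tau -> (x < pi / (2 * tau)) = (x * tau < pi / 2).
Proof. by move=> tau0; rewrite !ltr_pdivlMr ?mulr_gt0 // mulrA mulrAC. Qed.

Section Minimizer.
Variables tau lbar : R.
Hypotheses (tau_gt0 : 0 < tau) (lbar_gt0 : 0 < lbar) (lbar_lt : lbar < pi / (2 * tau)).
Hypothesis lbar_min :
  forall {x}, 0 < x -> x < pi / (2 * tau) -> ftau tau lbar <= ftau tau x.

Let lbar_tau_lt : lbar * tau < pi / 2.
Proof. by rewrite -ltr_pdiv_pihalf. Qed.

Let lbar_tau_max u : 0 < u -> u < pi / 2 -> inv_ftau1 u <= inv_ftau1 (lbar * tau).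
Proof.
move=> u0 upi; have utau : u / tau * tau = u by rewrite divfK ?gt_eqF.
have := lbar_min (divr_gt0 u0 tau_gt0); rewrite ltr_pdiv_pihalf // utau => /(_ upi).
rewrite !ftauE ?utau ?divr_gt0 // ler_pM2l // lef_pV2 // posrE inv_ftau1_gt0 //.
  by rewrite mulr_gt0.
by rewrite u0.
Qed.

Lemma ftau_ge_left x y : 0 < x -> x <= y -> y <= lbar -> ftau tau y <= ftau tau x.
Proof.
move=> x0 xy ylbar; have y0 := lt_le_trans x0 xy.
have ytau : y * tau <= lbar * tau by rewrite ler_pM2r.
have xtau : x * tau <= y * tau by rewrite ler_pM2r.
have ypi := le_lt_trans ytau lbar_tau_lt; have xpi := le_lt_trans xtau ypi.
rewrite !ftauE // ler_pM2l // lef_pV2 ?posrE ?inv_ftau1_gt0 ?mulr_gt0 //.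
exact: inv_ftau1_le_left _ lbar_tau_lt lbar_tau_max _ _ (mulr_gt0 x0 tau_gt0) xtau ytau.
Qed.

Lemma ftau_le_right x y : lbar <= x -> x <= y -> y * tau < pi / 2 ->
  ftau tau x <= ftau tau y.
Proof.
move=> lbarx xy ypi; have x0 := lt_le_trans lbar_gt0 lbarx.
have y0 := lt_le_trans x0 xy.
have xtau : lbar * tau <= x * tau by rewrite ler_pM2r.
have ytau : x * tau <= y * tau by rewrite ler_pM2r.
have xpi := le_lt_trans ytau ypi.
rewrite !ftauE // ler_pM2l // lef_pV2 ?posrE ?inv_ftau1_gt0 ?mulr_gt0 //.
exact: inv_ftau1_ge_right _ (mulr_gt0 lbar_gt0 tau_gt0) lbar_tau_max _ _ xtau ytau ypi.
Qed.

Lemma ftau_scale_sandwich_left (alpha s x : R) :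
  alpha < 1 -> 1 - alpha <= s -> s <= 1 + alpha ->
  0 <= x -> (1 + alpha) * x <= lbar ->
  (1 - chi tau alpha 1 x) * ftau tau x <= ftau tau (s * x) /\
  ftau tau (s * x) <= (1 + chi tau alpha (-1) x) * ftau tau x.
Proof.
move=> alpha_lt1 s_ge s_le.
(* [x = 0] is allowed: [ftau tau 0 = 0] by division by zero, so both bounds
   read [0 <= 0]. *)
rewrite le0r => /predU1P[-> _|x0 hx]; first by rewrite mulr0 ftau0 !mulr0; split.
have below (a : R) : a <= 1 + alpha -> a * x <= lbar.
  by move=> a_le; apply: le_trans hx; rewrite ler_pM2r.
have pos (a : R) : 1 - alpha <= a -> 0 < a * x.
  by move=> a_ge; apply: mulr_gt0 => //; lra.
rewrite /chi mul1r mulN1r; apply: rel_dist_sandwich.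
- rewrite ftau_gt0 // (le_lt_trans _ lbar_tau_lt) // ler_pM2r //.
  by rewrite -[x]mul1r below // lerDl; lra.
- by apply: ftau_ge_left; rewrite ?pos ?below // ler_pM2r.
by apply: ftau_ge_left; rewrite ?pos ?below // ler_pM2r.
Qed.

Lemma ftau_scale_sandwich_right (alpha s x : R) :
  alpha < 1 -> 1 - alpha <= s -> s <= 1 + alpha ->
  lbar <= (1 - alpha) * x -> (1 + alpha) * x * tau < pi / 2 ->
  (1 - chi tau alpha (-1) x) * ftau tau x <= ftau tau (s * x) /\
  ftau tau (s * x) <= (1 + chi tau alpha 1 x) * ftau tau x.
Proof.
move=> alpha_lt1 s_ge s_le hx xpi.
have x0 : 0 < x.
  by move: (lt_le_trans lbar_gt0 hx); rewrite pmulr_rgt0 // subr_gt0.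
have above (a : R) : 1 - alpha <= a -> lbar <= a * x.
  by move=> a_ge; apply: le_trans hx _; rewrite ler_pM2r.
have below (a : R) : a <= 1 + alpha -> a * x * tau < pi / 2.
  by move=> a_le; apply: le_lt_trans xpi; rewrite !ler_pM2r.
rewrite /chi mul1r mulN1r; apply: rel_dist_sandwich.
- by rewrite ftau_gt0 // -[x]mul1r below // lerDl; lra.
- by apply: ftau_le_right; rewrite ?above ?below // ler_pM2r.
by apply: ftau_le_right; rewrite ?above ?below // ler_pM2r.
Qed.

End Minimizer.
End Delay.

Lemma quad_form_diag_mx (R : comPzRingType) N (r : 'rV[R]_N) (w : 'cV[R]_N) :
  (w^T *m diag_mx r *m w) 0 0 = \sum_i r 0 i * w i 0 ^+ 2.
Proof. by rewrite mul_mx_diag !mxE; apply: eq_bigr => i _; rewrite !mxE mulrCA mulrA. Qed.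

Lemma loewner_leP (R : realType) N (A B : 'M[R]_N) :
  (forall v : 'cV_N, (v^T *m A *m v) 0 0 <= (v^T *m B *m v) 0 0) -> loewner_le A B.
Proof.
move=> le_AB v; rewrite mulmxBr mulmxBl.
by move: (v^T *m A *m v) (v^T *m B *m v) (le_AB v) => a c; rewrite !mxE subr_ge0.
Qed.

Lemma quad_formZ {R : comPzRingType} {N} (c : R) (A : 'M[R]_N) (v : 'cV[R]_N) :
  (v^T *m (c *: A) *m v) 0 0 = c * (v^T *m A *m v) 0 0.
Proof. by rewrite -scalemxAr -scalemxAl mxE. Qed.

Lemma le_max_nonzero (R : realType) n (g : 'I_n.+1 -> R) k :
  k != ord0 -> g k <= max_nonzero g.
Proof. by move=> k0; rewrite /max_nonzero; apply: le_bigmax_cond. Qed.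

Section Covariance.
Variables (R : realType) (n : nat) (tau b : R) (Q : 'M[R]_n.+1).

Lemma trmx_centering N : (centering R N)^T = centering R N.
Proof. by rewrite /centering linearB linearZ /= trmx1 trmx_const. Qed.

Lemma ss_covariance_quad (lam : 'I_n.+1 -> R) (v : 'cV[R]_n.+1) :
  (v^T *m ss_covariance tau b Q lam *m v) 0 0 =
  b ^+ 2 * \sum_i (if i == ord0 then 0 else ftau tau (lam i) / 2)
     * (Q^T *m centering R n.+1 *m v) i 0 ^+ 2.
Proof.
rewrite /ss_covariance -scalemxAr -scalemxAl mxE; congr (_ * _).
set w := Q^T *m _ *m v; set D := diag_mx _.
have -> : v^T *m (centering R n.+1 *m Q *m D *m Q^T *m centering R n.+1) *m v
    = w^T *m D *m w.
  by rewrite /w !trmx_mul trmxK trmx_centering !mulmxA.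
by rewrite quad_form_diag_mx; apply: eq_bigr => i _; rewrite mxE.
Qed.

Lemma loewner_le_ss_covariance (c1 c2 : R) (lam1 lam2 : 'I_n.+1 -> R) :
  (forall i, i != ord0 -> c1 * ftau tau (lam1 i) <= c2 * ftau tau (lam2 i)) ->
  loewner_le (c1 *: ss_covariance tau b Q lam1) (c2 *: ss_covariance tau b Q lam2).
Proof.
move=> le12; apply: loewner_leP => v.
rewrite (quad_formZ c1) (quad_formZ c2).
rewrite !ss_covariance_quad mulrCA [c2 * _]mulrCA.
rewrite ler_wpM2l ?sqr_ge0 // !mulr_sumr ler_sum // => i _.
case: eqVneq => [_|i0]; first by rewrite !mul0r !mulr0.
rewrite (mulrA c1) (mulrA c2) ler_wpM2r ?sqr_ge0 //.
by rewrite (mulrA c1) (mulrA c2) ler_wpM2r ?invr_ge0 // le12.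
Qed.

Lemma ss_covariance_sandwich (lam lam' em ep : 'I_n.+1 -> R) :
  (forall k, k != ord0 ->
     [/\ 0 <= ftau tau (lam k),
         (1 - em k) * ftau tau (lam k) <= ftau tau (lam' k) &
         ftau tau (lam' k) <= (1 + ep k) * ftau tau (lam k)]) ->
  loewner_le ((1 - max_nonzero em) *: ss_covariance tau b Q lam)
             (ss_covariance tau b Q lam') /\
  loewner_le (ss_covariance tau b Q lam')
             ((1 + max_nonzero ep) *: ss_covariance tau b Q lam).
Proof.
move=> bounds; rewrite -[ss_covariance _ _ _ lam']scale1r.
split; apply: loewner_le_ss_covariance => k k0; rewrite mul1r;
  have [f_ge0 lower upper] := bounds k k0.
- apply: le_trans lower; rewrite ler_wpM2r // lerB //; exact: le_max_nonzero.
- apply: le_trans upper _; rewrite ler_wpM2r // lerD //; exact: le_max_nonzero.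
Qed.

End Covariance.

Theorem proposition4 (R : realType) (n : nat)
  (E : rel 'I_n.+1) (w0 : 'I_n.+1 -> 'I_n.+1 -> R)
  (Q : 'M[R]_n.+1) (lam0 : 'I_n.+1 -> R)
  (tau b alpha lbar s : R) :
  (* connected undirected simple graph with positive edge weights *)
  (forall i, ~~ E i i) ->
  (forall i j, E i j = E j i) ->
  (forall i j, connect E i j) ->
  (forall i j, w0 i j = w0 j i) ->
  (forall i j, E i j -> 0 < w0 i j) ->
  (forall i j, ~~ E i j -> w0 i j = 0) ->
  (* spectral decomposition L0 = Q Lambda Q^T *)
  Q *m Q^T = 1%:M ->
  col ord0 Q = const_mx (Num.sqrt (n.+1)%:R)^-1 ->
  laplacian w0 = Q *m diag_mx (\row_i lam0 i) *m Q^T ->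
  lam0 ord0 = 0 ->
  (forall i j : 'I_n.+1, (i <= j)%N -> lam0 i <= lam0 j) ->
  (* parameters *)
  0 < tau -> b != 0 -> 0 <= alpha -> alpha < 1 ->
  (1 + alpha) * lam0 ord_max * tau < pi / 2 ->
  (* lbar is the minimizer of f_tau on (0, pi/(2 tau)) *)
  0 < lbar -> lbar < pi / (2 * tau) ->
  (forall x, 0 < x -> x < pi / (2 * tau) -> ftau tau lbar <= ftau tau x) ->
  (* uniform scaling *)
  1 - alpha <= s -> s <= 1 + alpha ->
  let Sigma0 := ss_covariance tau b Q lam0 in
  let Sigma := ss_covariance tau b Q (fun i => s * lam0 i) in
  ((1 + alpha) * lam0 ord_max <= lbar ->
     let em := max_nonzero (fun k => chi tau alpha 1 (lam0 k)) in
     let ep := max_nonzero (fun k => chi tau alpha (-1) (lam0 k)) in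
     loewner_le ((1 - em) *: Sigma0) Sigma /\
     loewner_le Sigma ((1 + ep) *: Sigma0))
  /\
  ((1 - alpha) * lam0 (inord 1) >= lbar ->
     let ep := max_nonzero (fun k => chi tau alpha 1 (lam0 k)) in
     let em := max_nonzero (fun k => chi tau alpha (-1) (lam0 k)) in
     loewner_le ((1 - em) *: Sigma0) Sigma /\
     loewner_le Sigma ((1 + ep) *: Sigma0)).
Proof.
move=> _ _ _ _ _ _ _ _ _ lam00 lam0_mono tau0 _ alpha0 alpha1 hmax lbar0 lbar_lt
  lbar_min s_ge s_le Sigma0 Sigma.
have alpha1_ge1 : 1 <= 1 + alpha by rewrite lerDl.
have alpha1_ge0 := le_trans ler01 alpha1_ge1.
have alpha1m_ge0 : 0 <= 1 - alpha by rewrite subr_ge0 ltW.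
have lam0_ge0 k : 0 <= lam0 k by rewrite -lam00 lam0_mono.
have lam0_le_max k : lam0 k <= lam0 ord_max by rewrite lam0_mono // -ltnS.
have lam0_pi k : (1 + alpha) * lam0 k * tau < pi / 2.
  by apply: le_lt_trans hmax; rewrite ler_pM2r // ler_wpM2l.
have f_ge0 k : 0 <= ftau tau (lam0 k).
  by apply: ftau_ge0 (le_lt_trans _ (lam0_pi k)); rewrite // ler_pM2r // ler_peMl.
have sandwich_left x := @ftau_scale_sandwich_left R tau lbar tau0 lbar0 lbar_lt
  lbar_min alpha s x alpha1 s_ge s_le.
have sandwich_right x := @ftau_scale_sandwich_right R tau lbar tau0 lbar0 lbar_lt
  lbar_min alpha s x alpha1 s_ge s_le.
split=> [hi|hii]; apply: ss_covariance_sandwich => k k0; rewrite f_ge0.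
  have hk := le_trans (ler_wpM2l alpha1_ge0 (lam0_le_max k)) hi.
  by have [lower upper] := sandwich_left _ (lam0_ge0 k) hk; split.
have lam01_le : lam0 (inord 1) <= lam0 k.
  have k_gt0 : (0 < k)%N by rewrite lt0n.
  by rewrite lam0_mono // inordK // (leq_ltn_trans k_gt0 (ltn_ord k)).
have hk := le_trans hii (ler_wpM2l alpha1m_ge0 lam01_le).
by have [lower upper] := sandwich_right _ hk (lam0_pi k); split.
Qed.
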